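(* Let $G$ be an antimatroid on a ground set $S$ with $|S|=n$, and for $i,j\ge0$ let $a_{i,j}$ be the number of convex sets $C$ of $G$ with $|C|=i$ and $|\mathrm{int}(C)|=j$. Then: (1) for every integer $0\le k<n$, $$\sum_{i=0}^{k}\sum_{j=0}^{k-i}(-1)^j\binom{k-i}{j}\sum_{s=i}^{n}(-1)^{s-i}\binom{s}{i}a_{s,j}=0;$$ (2) for $k=n$, $$\sum_{i=0}^{n}\sum_{j=0}^{n-i}(-1)^j\binom{n-i}{j}\sum_{s=i}^{n}(-1)^{s-i}\binom{s}{i}a_{s,j}=1.$$
   Context: An antimatroid on a finite set $S$ is a family $\mathcal{F}\subseteq 2^S$ of feasible sets with $\emptyset\in\mathcal{F}$, $S\in\mathcal{F}$, closed under union, and accessible: every nonempty $F\in\mathcal{F}$ contains some $x$ with $F\setminus\{x\}\in\mathcal{F}$. A set $C$ is convex if $S\setminus C\in\mathcal{F}$; convex sets are closed under intersection, and the convex closure $\overline{A}$ of $A$ is the smallest convex set containing $A$. For convex $C$, $p\in C$ is extreme if $p\notin\overline{C\setminus\{p\}}$; $\mathrm{int}(C)$ is the set of non-extreme points of $C$. *)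

From mathcomp Require Import all_boot all_order all_algebra.
Set Implicit Arguments. Unset Strict Implicit. Unset Printing Implicit Defensive.
Import GRing.Theory Num.Theory.

Section Antimatroid.
Variable T : finType.

Definition antimatroid (F : {set {set T}}) : Prop :=
  [/\ set0 \in F, [set: T] \in F,
      (forall A B, A \in F -> B \in F -> A :|: B \in F) &
      (forall A, A \in F -> A != set0 -> exists2 x, x \in A & A :\ x \in F)].

Definition convex (F : {set {set T}}) (C : {set T}) : bool := ~: C \in F.

Definition cclosure (F : {set {set T}}) (A : {set T}) : {set T} :=
  \bigcap_(C | convex F C && (A \subset C)) C.

Definition extreme (F : {set {set T}}) (C : {set T}) (p : T) : bool :=
  (p \in C) && (p \notin cclosure F (C :\ p)).

Definition cint (F : {set {set T}}) (C : {set T}) : {set T} :=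
  [set p in C | ~~ extreme F C p].

Definition acount (F : {set {set T}}) (i j : nat) : nat :=
  #|[set C : {set T} | convex F C && (#|C| == i) && (#|cint F C| == j)]|.

End Antimatroid.

Local Open Scope ring_scope.

Definition csum (T : finType) (F : {set {set T}}) (k : nat) : int :=
  \sum_(0 <= i < k.+1) \sum_(0 <= j < (k - i)%N.+1)
    ((-1) ^+ j * ('C(k - i, j))%:R *
     \sum_(i <= s < #|T|.+1) ((-1) ^+ (s - i) * ('C(s, i))%:R * (acount F s j)%:R)).

(* Every set A has a convex closure, and A closes to a given convex set C exactly
   when ex(C) <= A <= C, where ex(C) = C \ int(C) is the set of extreme points of C.
   Partitioning all subsets of the ground set by their closures therefore gives
     sum_C y^|ex C| (y + 1)^|int C| = (y + 1)^n.
   Substituting y = X - 1 turns this into sum_C (X - 1)^|ex C| X^|int C| = X^n, and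
   the alternating sum of the statement is the coefficient of X^k in this identity
   multiplied by the truncated geometric series 1 + X + ... + X^k, because
   (X - 1)^j * sum_m (-1)^j C(m, j) X^m = X^j/(1 - X) as power series. *)
From mathcomp Require Import all_boot all_order all_algebra.
From mathcomp Require Import ring.
Set Implicit Arguments. Unset Strict Implicit. Unset Printing Implicit Defensive.
Import GRing.Theory.
Local Open Scope ring_scope.

Lemma sum_exp_card_between (T : finType) (R : comNzRingType) (y : R) (E C : {set T}) :
  E \subset C ->
  \sum_(A : {set T} | (E \subset A) && (A \subset C)) y ^+ #|A| =
  y ^+ #|E| * (y + 1) ^+ #|C :\: E|.
Proof.
move=> EC.
pose f i : R := if i \in C then y else 0.
pose g i : R := if i \in E then 0 else 1.
have -> : y ^+ #|E| * (y + 1) ^+ #|C :\: E| = \prod_i (f i + g i).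
  rewrite -!prodr_const [in LHS]big_mkcond [X in _ * X]big_mkcond -big_split /=.
  apply: eq_bigr => i _; rewrite /f /g in_setD.
  have [iE | _] := boolP (i \in E); first by rewrite (subsetP EC) // addr0 mulr1.
  by case: (i \in C); rewrite ?mul1r ?add0r.
rewrite (@bigA_distr R 0 1 *%R +%R) big_mkcond /=; apply: eq_bigr => A _.
case: ifP => [/andP[EA sAC] | /negbT].
  rewrite -prodr_const big_mkcond /=; apply: eq_bigr => i _.
  case: ifP => iA; first by rewrite /f (subsetP sAC).
  by rewrite /g; case: ifP => // iE; rewrite (subsetP EA) in iA.
rewrite negb_and => /orP[] /subsetPn [i iA iN].
  by rewrite (bigD1 i) //= ifN // /g iA mul0r.
by rewrite (bigD1 i) //= iA /f ifN // mul0r.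
Qed.

Section ConvexClosure.
Variables (T : finType) (F : {set {set T}}).
Implicit Types (A B C : {set T}) (p : T).

Lemma subset_cclosure A : A \subset cclosure F A.
Proof. by apply/bigcapsP => C /andP[]. Qed.

Lemma cclosure_min A C : convex F C -> A \subset C -> cclosure F A \subset C.
Proof. by move=> cC sAC; apply: bigcap_inf; rewrite cC sAC. Qed.

Definition extremes C : {set T} := C :\: cint F C.

Lemma card_extremes_cint C : #|C| = (#|extremes C| + #|cint F C|)%N.
Proof.
have intC : cint F C \subset C by apply/subsetP => p; rewrite inE => /andP[].
by rewrite /extremes -(cardsID (cint F C) C) (setIidPr intC) addnC.
Qed.

Lemma card_cint C : #|C :\: extremes C| = #|cint F C|.
Proof.
by rewrite cardsD (setIidPr (subsetDl _ _)) (card_extremes_cint C) addKn.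
Qed.

Hypothesis F_set0 : set0 \in F.
Hypothesis F_setU : forall A B, A \in F -> B \in F -> A :|: B \in F.

Lemma convex_cclosure A : convex F (cclosure F A).
Proof.
rewrite /convex /cclosure setC_bigcap.
by apply: (big_ind (fun X => X \in F)) => // C /andP[].
Qed.

Lemma cclosure_mono A B : A \subset B -> cclosure F A \subset cclosure F B.
Proof.
move=> AB; apply: cclosure_min (convex_cclosure B) _.
exact: subset_trans AB (subset_cclosure B).
Qed.

Lemma extreme_cclosure A p : extreme F (cclosure F A) p -> p \in A.
Proof.
case/andP=> pA; apply: contraNT => pNA; apply: (subsetP (cclosure_mono _)) pA.
apply/subsetP => x xA; rewrite in_setD1 (subsetP (subset_cclosure A)) // andbT.
by apply: contraNneq pNA => <-.
Qed.

Hypothesis F_accessible :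
  forall A, A \in F -> A != set0 -> exists2 x, x \in A & A :\ x \in F.

Lemma feasible_augment B A : B \in F -> A \in F -> ~~ (B \subset A) ->
  exists2 x, x \in B :\: A & x |: A \in F.
Proof.
elim: {B}_.+1 {-2}B (ltnSn #|B|) => // n IH B ltBn BF AF BA.
have [x xB BxF] : exists2 x, x \in B & B :\ x \in F.
  by apply: F_accessible => //; apply: contraNneq BA => ->; apply: sub0set.
have [BxA | BxA] := boolP (B :\ x \subset A).
  have xNA : x \notin A.
    by apply: contra BA => xA; rewrite -(setD1K xB) subUset sub1set xA.
  exists x; first by rewrite inE xNA.
  by rewrite -(setUidPl BxA) setUCA setD1K //; apply: F_setU.
have ltBxn : (#|B :\ x| < n)%N by rewrite (cardsD1 x B) xB in ltBn.
have [y] := IH _ ltBxn BxF AF BxA.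
by rewrite !inE => /and3P[yNA _ yB] yAF; exists y; rewrite ?inE ?yNA.
Qed.

Lemma cclosure_extremes C : convex F C -> cclosure F (extremes C) = C.
Proof.
move=> cC; apply/eqP; rewrite eqEsubset cclosure_min ?subsetDl //=.
apply: contraT => CNcl.
have [x] : exists2 x, x \in ~: cclosure F (extremes C) :\: ~: C & x |: ~: C \in F.
  by apply: feasible_augment (convex_cclosure _) cC _; rewrite setCS.
rewrite !inE negbK => /andP[xC xNcl] xF.
have cCx : convex F (C :\ x) by rewrite /convex setDE setCI setCK setUC.
have : x \in extremes C.
  rewrite !inE xC /= negbK /extreme xC andbT.
  apply/negP => /(subsetP (cclosure_min cCx (subxx _))).
  by rewrite in_setD1 eqxx.
by move/(subsetP (subset_cclosure _)); rewrite (negbTE xNcl).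
Qed.

Lemma cclosure_eq C A : convex F C ->
  (cclosure F A == C) = (extremes C \subset A) && (A \subset C).
Proof.
move=> cC; apply/eqP/andP => [<- | [exA sAC]].
  split; last exact: subset_cclosure.
  apply/subsetP => p; rewrite !inE negb_and negbK => /andP[+ pA].
  by rewrite pA => /extreme_cclosure.
apply/eqP; rewrite eqEsubset cclosure_min //= -{1}(cclosure_extremes cC).
exact: cclosure_mono.
Qed.

Lemma sum_convex_extremes_cint (R : comNzRingType) (y : R) :
  \sum_(C : {set T} | convex F C) y ^+ #|extremes C| * (y + 1) ^+ #|cint F C|
  = (y + 1) ^+ #|T|.
Proof.
have := sum_exp_card_between y (sub0set [set: T]).
rewrite setD0 cardsT cards0 expr0 mul1r => <-.
rewrite [RHS](partition_big (cclosure F) (convex F)) => [|A _]; last first.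
  exact: convex_cclosure.
apply: eq_bigr => C cC.
rewrite -card_cint -sum_exp_card_between ?subsetDl //; apply: eq_bigl => A.
by rewrite sub0set subsetT (cclosure_eq _ cC).
Qed.

End ConvexClosure.

Lemma sum_nat_fiber (I : finType) (R : comNzRingType) (P : pred I)
    (phi : I -> nat) (h : nat -> R) (G : I -> R) (m n : nat) :
  (forall i, P i -> ~~ (m <= phi i < n)%N -> h (phi i) = 0) ->
  \sum_(m <= j < n) h j * \sum_(i | P i) (phi i == j)%:R * G i
  = \sum_(i | P i) h (phi i) * G i.
Proof.
move=> h_out; under eq_bigr => j _ do rewrite big_distrr.
rewrite exchange_big /=; apply: eq_bigr => i Pi.
transitivity (\sum_(m <= j < n | j == phi i) h j * G i).
  rewrite [RHS]big_mkcond; apply: eq_bigr => j _; rewrite mulrCA eq_sym.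
  by case: eqP; rewrite ?mul1r ?mul0r.
rewrite big_nat1_eq; case: ifP => // /negbT /(h_out i Pi) ->.
by rewrite mul0r.
Qed.

Lemma coef_XsubC1_exp (s i : nat) :
  (('X - 1 : {poly int}) ^+ s)`_i = (-1) ^+ (s - i) * ('C(s, i))%:R.
Proof.
elim: s i => [|s IH] [|i]; rewrite ?expr0 ?coef1 ?mulr1 ?mulr0 //.
  rewrite exprS mulrBl mul1r coefB coefXM IH bin0 !subn0 exprS; ring.
rewrite exprS mulrBl mul1r coefB coefXM /= !IH binS natrD subSS.
have [lt_is | le_si] := ltnP i s; last first.
  by rewrite (@bin_small s i.+1) ?ltnS // mulr0 subr0 add0r.
by rewrite -(subnSK lt_is) exprS; ring.
Qed.

Section TruncatedSeries.
Variable k : nat.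

Definition eq_upto (p q : {poly int}) := forall m, (m <= k)%N -> p`_m = q`_m.

Lemma eq_uptoMl r p q : eq_upto p q -> eq_upto (r * p) (r * q).
Proof.
move=> pq m le_mk; rewrite !coefM; apply: eq_bigr => i _.
by rewrite pq // (leq_trans (leq_subr _ _) le_mk).
Qed.

Lemma eq_upto_trans p q r : eq_upto p q -> eq_upto q r -> eq_upto p r.
Proof. by move=> pq qr m le_mk; rewrite pq // qr. Qed.

Definition geom_trunc : {poly int} := \poly_(m < k.+1) 1.

(* Truncation of the power series (-1)^j X^j / (1 - X)^(j+1). *)
Definition binom_trunc (j : nat) : {poly int} :=
  \poly_(m < k.+1) ((-1) ^+ j * ('C(m, j))%:R).

Lemma binom_truncS j : eq_upto (('X - 1) * binom_trunc j.+1) ('X * binom_trunc j).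
Proof.
move=> [|m] le_mk; rewrite mulrBl mul1r coefB !coefXM !coef_poly.
  by rewrite bin0n mulr0 subr0.
by rewrite /= !ltnS le_mk (ltnW le_mk) binS natrD exprS; ring.
Qed.

Lemma binom_trunc_geom j :
  eq_upto (('X - 1) ^+ j * binom_trunc j) ('X ^+ j * geom_trunc).
Proof.
elim: j => [|j IH] => [m le_mk|].
  by rewrite !expr0 !mul1r !coef_poly expr0 bin0 mul1r.
apply: (@eq_upto_trans _ (('X - 1) ^+ j * ('X * binom_trunc j))).
  by rewrite exprSr -mulrA; apply/eq_uptoMl/binom_truncS.
by rewrite mulrCA exprS -mulrA; apply: eq_uptoMl.
Qed.

End TruncatedSeries.

Section AlternatingSum.
Variables (T : finType) (F : {set {set T}}).

Lemma acountE s j : (acount F s j)%:R =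
  \sum_(C : {set T} | convex F C) (#|C| == s)%:R * (#|cint F C| == j)%:R :> int.
Proof.
rewrite /acount -sum1_card natr_sum [RHS]big_mkcond [LHS]big_mkcond /=.
apply: eq_bigr => C _; rewrite inE -andbA.
by case: (convex F C) (#|C| == s) (#|cint F C| == j) => [] [] [].
Qed.

Lemma csum_coef k : csum F k = \sum_(C : {set T} | convex F C)
  (('X - 1) ^+ #|C| * binom_trunc k #|cint F C|)`_k.
Proof.
rewrite /csum; under eq_bigr => i _.
  under eq_bigr => j _.
    under eq_bigr => s _ do rewrite acountE.
    rewrite (sum_nat_fiber (phi := fun C : {set T} => #|C|)); last first.
      move=> C _; rewrite ltnS max_card andbT -ltnNge => lt_Ci.
      by rewrite bin_small // mulr0.
    under eq_bigr => C _ do rewrite mulrC.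
  over.
  rewrite (sum_nat_fiber (phi := fun C : {set T} => #|cint F C|)); last first.
    by move=> C _; rewrite -ltnNge ltnS => lt_ki; rewrite bin_small // mulr0.
over.
rewrite exchange_big /=; apply: eq_bigr => C _.
rewrite coefM big_mkord; apply: eq_bigr => i _.
by rewrite coef_XsubC1_exp coef_poly ltnS leq_subr mulrC.
Qed.

End AlternatingSum.

Lemma csum_antimatroid (T : finType) (F : {set {set T}}) (k : nat) :
  antimatroid F -> csum F k = (#|T| <= k)%N%:R.
Proof.
case=> F0 _ FU Facc; rewrite csum_coef.
have truncate (C : {set T}) : (('X - 1) ^+ #|C| * binom_trunc k #|cint F C|)`_k =
    (('X - 1) ^+ #|extremes F C| * 'X ^+ #|cint F C| * geom_trunc k)`_k.
  rewrite (card_extremes_cint F) exprD -!mulrA.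
  exact: (@eq_uptoMl k _ _ _ (@binom_trunc_geom k _) k (leqnn k)).
under eq_bigr => C _ do rewrite truncate.
rewrite -coef_sum -big_distrl /= -{2}(subrK 1 'X) (sum_convex_extremes_cint F0 FU Facc).
rewrite subrK coefXnM; case: ltnP => // le_nk.
by rewrite coef_poly ltnS leq_subr.
Qed.

Theorem corollary4p4 (T : finType) (F : {set {set T}}) :
  antimatroid F ->
  (forall k : nat, (k < #|T|)%N -> csum F k = 0%R) /\ csum F #|T| = 1%R.
Proof.
move=> hF; split=> [k lt_kn|]; rewrite csum_antimatroid //.
  by rewrite leqNgt lt_kn.
by rewrite leqnn.
Qed.
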